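(* Let $\mathcal{M}=(\mathbf A,\perp,\{\mathsf{t},\mathsf{f}\})$ be an $\mathfrak{N}_w$-model and let $x,y$ be distinct propositional variables. Then $h((x\Rightarrow y)\Rightarrow(y\Rightarrow x))\perp\mathsf{f}$ for every homomorphism $h$ from the formula algebra into $\mathbf A$ if and only if $\mathbf A$ is trivial (has exactly one element).
   Context: Formulas are built from variables using binary $\otimes,\circ$ and unary ${}^{*}$; in formulas and algebras, $\varphi\Rightarrow\psi:=(\varphi\circ\psi^{*})^{*}$, $\varphi\Leftrightarrow\psi:=(\varphi\Rightarrow\psi)\otimes(\psi\Rightarrow\varphi)$, $\varphi\not\Leftrightarrow\psi:=(\varphi\Leftrightarrow\psi)^{*}$, $\varphi\not\Leftrightarrow\psi\not\Leftrightarrow\chi:=((\varphi\not\Leftrightarrow\psi)\otimes(\varphi\not\Leftrightarrow\chi))\otimes(\psi\not\Leftrightarrow\chi)$. A weak $\mathcal{N}$-algebra is an algebra $(A,\otimes,\circ,{}^{*})$ of type $(2,2,1)$ with $\otimes,\circ$ commutative, $x^{**}=x$, and $(x\otimes y)\circ z=(x\otimes z)\circ y$. With $\mathsf{t}\ne\mathsf{f}$ symbols not in $A$, $\overline A=A\cup\{\mathsf{t},\mathsf{f}\}$, an $\mathfrak{N}_w$-model is $(\mathbf A,\perp,\{\mathsf{t},\mathsf{f}\})$, $\mathbf A$ a weak $\mathcal{N}$-algebra, $\perp\subseteq\overline A\times\overline A$, such that for all $x,y,z\in A$: (a) $x\perp x^{*}$; (b) $x\perp y^{*}$ and $y\perp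 x^{*}$ imply $x=y$; (c) $x\perp y$ iff $x\circ y\perp\mathsf{t}$; (d) $x\perp\mathsf{t}$ iff $x^{*}\perp\mathsf{f}$; (e) $x\perp\mathsf{f}$ and $y\perp\mathsf{f}$ iff $x\otimes y\perp\mathsf{f}$; (f) $(x\circ y^{*})^{*}\perp(x\circ y)^{*}$; (g) $x\perp y$ and $x\perp\mathsf{f}$ imply $y\perp\mathsf{t}$; (h) $(x\not\Leftrightarrow y\not\Leftrightarrow z)\perp((x\Rightarrow y)\Rightarrow((y\Rightarrow z)\Rightarrow(x\Rightarrow z)))^{*}$. *)

Set Implicit Arguments.

Inductive form : Type :=
| Var : nat -> form
| FTen : form -> form -> form
| FCirc : form -> form -> form
| FStar : form -> form.

Definition FImp (p q : form) : form := FStar (FCirc p (FStar q)).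

Section Alg.
Variables (A : Type) (tens circ : A -> A -> A) (star : A -> A).

Definition aimp (x y : A) : A := star (circ x (star y)).
Definition aiff (x y : A) : A := tens (aimp x y) (aimp y x).
Definition anIff (x y : A) : A := star (aiff x y).
Definition anIff3 (x y z : A) : A :=
  tens (tens (anIff x y) (anIff x z)) (anIff y z).

Definition weak_N_algebra : Prop :=
  (forall x y, tens x y = tens y x) /\
  (forall x y, circ x y = circ y x) /\
  (forall x, star (star x) = x) /\
  (forall x y z, circ (tens x y) z = circ (tens x z) y).

Inductive ext : Type :=
| Elt : A -> ext
| Tt : ext
| Ff : ext.

Variable perp : ext -> ext -> Prop.

(* N_w-model conditions (a)-(h) *)
Definition Nw_model : Prop :=
  weak_N_algebra /\
  (forall x, perp (Elt x) (Elt (star x))) /\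
  (forall x y, perp (Elt x) (Elt (star y)) -> perp (Elt y) (Elt (star x)) -> x = y) /\
  (forall x y, perp (Elt x) (Elt y) <-> perp (Elt (circ x y)) Tt) /\
  (forall x, perp (Elt x) Tt <-> perp (Elt (star x)) Ff) /\
  (forall x y, (perp (Elt x) Ff /\ perp (Elt y) Ff) <-> perp (Elt (tens x y)) Ff) /\
  (forall x y, perp (Elt (star (circ x (star y)))) (Elt (star (circ x y)))) /\
  (forall x y, perp (Elt x) (Elt y) -> perp (Elt x) Ff -> perp (Elt y) Tt) /\
  (forall x y z, perp (Elt (anIff3 x y z))
     (Elt (star (aimp (aimp x y) (aimp (aimp y z) (aimp x z)))))).

Definition is_hom (h : form -> A) : Prop :=
  (forall p q, h (FTen p q) = tens (h p) (h q)) /\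
  (forall p q, h (FCirc p q) = circ (h p) (h q)) /\
  (forall p, h (FStar p) = star (h p)).

Definition trivial_alg : Prop := exists a : A, forall b : A, b = a.

End Alg.

(** Validity of [(x => y) => (y => x)] says that every pair [a, b] satisfies
    [(a => b) _|_ (b => a)^*] and symmetrically, so by antisymmetry (b) the
    implication [a => b] is symmetric in [a] and [b].  This collapses the
    model: [a => b] becomes [a o b], every [w o w] becomes valid, and the
    exchange law turns [u (x) (u (x) v)] into [v].  Writing an arbitrary [u]
    as [u (x) (u (x) (w o w))], condition (e) makes every element valid, and
    antisymmetry then identifies any two elements.  Conversely, in a
    one-element algebra the only element is [(a o a^* )^*], valid by (a), (c),
    (d). *)

From Stdlib Require Import Arith.

Section NwModel.

Variables (A : Type) (tens circ : A -> A -> A) (star : A -> A).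
Variable perp : ext A -> ext A -> Prop.

Local Notation imp := (aimp circ star).
Local Notation valid u := (perp (Elt u) (Ff A)).

Fixpoint eval (v : nat -> A) (p : form) : A :=
  match p with
  | Var n => v n
  | FTen p q => tens (eval v p) (eval v q)
  | FCirc p q => circ (eval v p) (eval v q)
  | FStar p => star (eval v p)
  end.

Lemma eval_is_hom (v : nat -> A) : is_hom tens circ star (eval v).
Proof. repeat split. Qed.

Lemma eval_FImp (v : nat -> A) (p q : form) :
  eval v (FImp p q) = imp (eval v p) (eval v q).
Proof. reflexivity. Qed.

Lemma valid_imp_comm_of_valid_formula (x y : nat) : x <> y ->
  (forall h, is_hom tens circ star h ->
     valid (h (FImp (FImp (Var x) (Var y)) (FImp (Var y) (Var x))))) ->
  forall u v, valid (imp (imp u v) (imp v u)).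
Proof.
  intros Hxy Hvalid u v.
  set (val := fun n => if Nat.eqb n x then u else v).
  assert (Hvx : val x = u) by (unfold val; now rewrite Nat.eqb_refl).
  assert (Hvy : val y = v).
  { unfold val. now rewrite (proj2 (Nat.eqb_neq y x) (not_eq_sym Hxy)). }
  specialize (Hvalid (eval val) (eval_is_hom val)).
  rewrite !eval_FImp in Hvalid; cbn [eval] in Hvalid.
  now rewrite Hvx, Hvy in Hvalid.
Qed.

Hypothesis star_involutive : forall u, star (star u) = u.
Hypothesis circ_tens_exchange :
  forall u v w, circ (tens u v) w = circ (tens u w) v.
Hypothesis perp_star_refl : forall u, perp (Elt u) (Elt (star u)).
Hypothesis perp_star_antisym : forall u v,
  perp (Elt u) (Elt (star v)) -> perp (Elt v) (Elt (star u)) -> u = v.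
Hypothesis perp_circ_t : forall u v,
  perp (Elt u) (Elt v) <-> perp (Elt (circ u v)) (Tt A).
Hypothesis perp_t_star_f : forall u,
  perp (Elt u) (Tt A) <-> valid (star u).
Hypothesis tens_valid : forall u v, valid u /\ valid v <-> valid (tens u v).
Hypothesis perp_imp_star_circ : forall u v,
  perp (Elt (imp u v)) (Elt (star (circ u v))).

Lemma perp_star_iff_valid_imp (u v : A) :
  perp (Elt u) (Elt (star v)) <-> valid (imp u v).
Proof.
  unfold aimp.
  rewrite perp_circ_t.
  apply perp_t_star_f.
Qed.

Lemma valid_imp_refl (u : A) : valid (imp u u).
Proof. apply perp_star_iff_valid_imp, perp_star_refl. Qed.

Lemma eq_of_valid_imp (u v : A) : valid (imp u v) -> valid (imp v u) -> u = v.
Proof.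
  intros Huv Hvu.
  apply perp_star_antisym; apply perp_star_iff_valid_imp; assumption.
Qed.

Lemma valid_of_trivial : trivial_alg A -> forall u, valid u.
Proof.
  intros [a Ha] u.
  rewrite (Ha u), <- (Ha (imp a a)).
  apply valid_imp_refl.
Qed.

Section ImpSymmetric.

Hypothesis valid_imp_comm : forall u v, valid (imp (imp u v) (imp v u)).

Lemma imp_comm (u v : A) : imp u v = imp v u.
Proof. apply eq_of_valid_imp; apply valid_imp_comm. Qed.

Lemma circ_star_comm (u v : A) : circ u (star v) = circ v (star u).
Proof.
  rewrite <- (star_involutive (circ u (star v))).
  change (star (imp u v) = circ v (star u)).
  rewrite imp_comm.
  apply star_involutive.
Qed.

Lemma perp_star_sym (u v : A) :
  perp (Elt u) (Elt (star v)) -> perp (Elt v) (Elt (star u)).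
Proof. rewrite !perp_circ_t, circ_star_comm. trivial. Qed.

Lemma imp_circ (u v : A) : imp u v = circ u v.
Proof.
  apply perp_star_antisym.
  - apply perp_imp_star_circ.
  - apply perp_star_sym, perp_imp_star_circ.
Qed.

Lemma valid_circ_diag (w : A) : valid (circ w w).
Proof. rewrite <- imp_circ. apply valid_imp_refl. Qed.

Lemma tens_involutive (u v : A) : tens u (tens u v) = v.
Proof.
  assert (Hvalid : valid (imp (tens u (tens u v)) v)).
  { rewrite imp_circ, circ_tens_exchange. apply valid_circ_diag. }
  apply eq_of_valid_imp; [|rewrite imp_comm]; exact Hvalid.
Qed.

Lemma all_valid (w u : A) : valid u.
Proof.
  assert (Hw := valid_circ_diag w).
  rewrite <- (tens_involutive u (circ w w)) in Hw.
  apply tens_valid in Hw.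
  apply Hw.
Qed.

Lemma trivial_of_valid_imp_comm : inhabited A -> trivial_alg A.
Proof.
  intros [a].
  exists a; intros b.
  apply eq_of_valid_imp; apply (all_valid a).
Qed.

End ImpSymmetric.

End NwModel.

Theorem proposition4p13
  (A : Type) (tens circ : A -> A -> A) (star : A -> A)
  (perp : ext A -> ext A -> Prop)
  (Hne : inhabited A)
  (HM : Nw_model tens circ star perp)
  (x y : nat) (Hxy : x <> y) :
  (forall h : form -> A, is_hom tens circ star h ->
     perp (Elt (h (FImp (FImp (Var x) (Var y)) (FImp (Var y) (Var x))))) (Ff A))
  <-> trivial_alg A.
Proof.
  destruct HM as [[_ [_ [Hss Hexch]]] [Ha [Hb [Hc [Hd [He [Hf _]]]]]]].
  split.
  - intros Hvalid.
    apply (trivial_of_valid_imp_comm A tens circ star perp Hss Hexch Ha Hb Hc Hd He Hf).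
    + exact (valid_imp_comm_of_valid_formula A tens circ star perp x y Hxy Hvalid).
    + exact Hne.
  - intros Htriv h _.
    now apply (valid_of_trivial A circ star perp Ha Hc Hd).
Qed.
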